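(* Let $d,k\ge 1$, $0<\alpha<1$, $v>0$, and let $S=\{(\mathbf{x}_1,y_1),\dots,(\mathbf{x}_n,y_n)\}\subseteq \mathcal{X}\times\mathcal{Y}$, where $\mathcal{X}=\{\mathbf{x}\in\mathbb{R}^d:\|\mathbf{x}\|\le 1\}$ and $\mathcal{Y}=\{\pm1\}$, be such that there is $\mathbf{w}^*\in\mathbb{R}^d$ with $y_i\langle \mathbf{w}^*,\mathbf{x}_i\rangle\ge 1$ for all $i$. Consider, as a function of $W\in\mathbb{R}^{2k\times d}$, the loss $$L_S(W)=\frac1n\sum_{i=1}^n \max\{1-y_iN_W(\mathbf{x}_i),0\},\qquad N_W(\mathbf{x})=\mathbf{v}^\top\sigma(W\mathbf{x}),$$ where $\sigma(z)=\max\{\alpha z,z\}$ is applied entrywise and $\mathbf{v}=(v,\dots,v,-v,\dots,-v)\in\mathbb{R}^{2k}$ ($k$ entries equal to $v$ followed by $k$ entries equal to $-v$). Then (1) every critical point of $L_S$ is a global minimum of $L_S$; and (2) $L_S$ is not convex.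
   Context: Gradients are computed with the convention $\sigma'(z)=1$ for $z\ge 0$ and $\sigma'(z)=\alpha$ for $z<0$, and for a single example $(\mathbf{x},y)$ the gradient of $\max\{1-yN_W(\mathbf{x}),0\}$ is taken to be $0$ when $yN_W(\mathbf{x})\ge 1$; when $yN_W(\mathbf{x})<1$ its gradient with respect to the $j$-th row $\mathbf{w}_j$ of $W$ is $-y\,v_j\,\sigma'(\langle \mathbf{w}_j,\mathbf{x}\rangle)\,\mathbf{x}$. The gradient of $L_S$ is the average of these per-example gradients, and a critical point is a $W$ where this gradient is zero. The minimum value of $L_S$ is $0$. *)

From HB Require Import structures.
From mathcomp Require Import all_boot all_order all_algebra.
Set Implicit Arguments. Unset Strict Implicit. Unset Printing Implicit Defensive.
Import Order.TTheory GRing.Theory Num.Theory.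
Local Open Scope ring_scope.

Section Net.
Variable R : realFieldType.

Definition leaky (alpha z : R) : R := Num.max (alpha * z) z.

Definition leaky' (alpha z : R) : R := if 0 <= z then 1 else alpha.

Definition dotp (d : nat) (u w : 'rV[R]_d) : R := \sum_(l < d) u 0 l * w 0 l.

Definition vvec (k : nat) (v : R) (j : 'I_(k + k)) : R :=
  if (j < k)%N then v else - v.

Definition netN (k d : nat) (alpha v : R) (W : 'M[R]_(k + k, d)) (x : 'rV[R]_d) : R :=
  \sum_(j < k + k) @vvec k v j * leaky alpha (dotp (row j W) x).

Definition lossS (k d n : nat) (alpha v : R) (xs : 'I_n -> 'rV[R]_d) (ys : 'I_n -> R)
    (W : 'M[R]_(k + k, d)) : R :=
  (n%:R)^-1 * \sum_(i < n) Num.max (1 - ys i * netN alpha v W (xs i)) 0.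

Definition grad_example (k d : nat) (alpha v : R) (x : 'rV[R]_d) (y : R)
    (W : 'M[R]_(k + k, d)) : 'M[R]_(k + k, d) :=
  if y * netN alpha v W x < 1 then
    \matrix_(j < k + k, l < d)
       (- y * @vvec k v j * leaky' alpha (dotp (row j W) x) * x 0 l)
  else 0.

Definition gradS (k d n : nat) (alpha v : R) (xs : 'I_n -> 'rV[R]_d) (ys : 'I_n -> R)
    (W : 'M[R]_(k + k, d)) : 'M[R]_(k + k, d) :=
  (n%:R)^-1 *: \sum_(i < n) grad_example alpha v (xs i) (ys i) W.

Definition critical_point (k d n : nat) (alpha v : R) (xs : 'I_n -> 'rV[R]_d)
    (ys : 'I_n -> R) (W : 'M[R]_(k + k, d)) : Prop :=
  gradS alpha v xs ys W = 0.

Definition global_min (m p : nat) (f : 'M[R]_(m, p) -> R) (W : 'M[R]_(m, p)) : Prop :=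
  forall W' : 'M[R]_(m, p), f W <= f W'.

Definition convex_fun (m p : nat) (f : 'M[R]_(m, p) -> R) : Prop :=
  forall (W1 W2 : 'M[R]_(m, p)) (t : R), 0 <= t -> t <= 1 ->
    f (t *: W1 + (1 - t) *: W2) <= t * f W1 + (1 - t) * f W2.

End Net.

(* At a critical point, pair the gradient row of a unit with output weight v
   against the separator w*: every example with positive hinge loss contributes
   a term of the same strict sign, because v, the slopes of the leaky ReLU and
   the margins y_i <w*, x_i> are all positive.  Hence no example has positive
   loss, and L_S vanishes there, which is its minimum.

   For non-convexity, restrict L_S to networks in which every positive unit has
   weights a u and every negative unit b u, for a fixed multiple u of w*.  Then
   y_i N(x_i) is a positive multiple of y_i (sigma(a y_i) - sigma(b y_i)), and
   the set of pairs (a, b) where this clears the threshold for both labels is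
   not midpoint-convex: there are two such pairs whose midpoint misclassifies
   the example of least margin.  So L_S vanishes at two points but not at their
   midpoint. *)

From mathcomp Require Import all_boot all_order all_algebra.
From mathcomp Require Import ring lra.
Import Order.TTheory GRing.Theory Num.Theory.
Local Open Scope ring_scope.
Set Implicit Arguments. Unset Strict Implicit.

Section Leaky.
Variables (R : realFieldType) (alpha : R).

Lemma leakyZ c z : 0 <= c -> leaky alpha (c * z) = c * leaky alpha z.
Proof. by move=> c_ge0; rewrite /leaky maxr_pMr // mulrCA. Qed.

Lemma leakyE z : 0 <= alpha <= 1 -> leaky alpha z = if 0 <= z then z else alpha * z.
Proof.
case/andP=> alpha_ge0 alpha_le1; rewrite /leaky; case: leP => [z_ge0|z_lt0].
  by apply: max_r; rewrite ler_piMl.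
by apply: max_l; rewrite ler_niMl // ltW.
Qed.

End Leaky.

Lemma leaky'_gt0 (R : realFieldType) (alpha z : R) : 0 < alpha -> 0 < leaky' alpha z.
Proof. by rewrite /leaky'; case: ifP. Qed.

Section Loss.
Variables (R : realFieldType) (k d n : nat) (alpha v : R).
Variables (xs : 'I_n -> 'rV[R]_d) (ys : 'I_n -> R).

Lemma lossS_ge0 (W : 'M_(k + k, d)) : 0 <= lossS alpha v xs ys W.
Proof.
rewrite /lossS mulr_ge0 ?invr_ge0 ?ler0n // sumr_ge0 // => i _.
by rewrite le_max lexx orbT.
Qed.

Lemma lossS_eq0 (W : 'M_(k + k, d)) : (forall i, 1 <= ys i * netN alpha v W (xs i)) ->
  lossS alpha v xs ys W = 0.
Proof.
by move=> fit; rewrite /lossS big1 ?mulr0 // => i _; apply: max_r; rewrite subr_le0.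
Qed.

Lemma lossS_gt0 (W : 'M_(k + k, d)) i : ys i * netN alpha v W (xs i) < 1 ->
  0 < lossS alpha v xs ys W.
Proof.
move=> miss; rewrite /lossS mulr_gt0 ?invr_gt0 ?ltr0n //; first by case: n i {miss} => [[]|].
rewrite (bigD1 i) //= ltr_pwDl ?lt_max ?subr_gt0 ?miss //.
by rewrite sumr_ge0 // => j _; rewrite le_max lexx orbT.
Qed.

Lemma critical_point_sum (W : 'M_(k + k, d)) : critical_point alpha v xs ys W ->
  \sum_i grad_example alpha v (xs i) (ys i) W = 0.
Proof.
rewrite /critical_point /gradS => /eqP; rewrite scaler_eq0 => /orP[|/eqP//].
rewrite invr_eq0 pnatr_eq0 => /eqP n0.
by apply: big1 => i _; have := leq_trans (ltn_ord i) (eq_leq n0).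
Qed.

End Loss.

Lemma dotpZl (R : realFieldType) (d : nat) (c : R) (u x : 'rV[R]_d) :
  dotp (c *: u) x = c * dotp u x.
Proof. by rewrite /dotp mulr_sumr; apply: eq_bigr => l _; rewrite mxE mulrA. Qed.

Lemma dotp_row_sum (R : realFieldType) (m d n : nat) (w : 'rV[R]_d)
    (M : 'I_n -> 'M_(m, d)) j :
  dotp w (row j (\sum_i M i)) = \sum_i dotp w (row j (M i)).
Proof.
rewrite /dotp exchange_big; apply: eq_bigr => l _.
by rewrite !mxE summxE mulr_sumr; apply: eq_bigr => i _; rewrite mxE.
Qed.

Lemma dotp_row_grad_example (R : realFieldType) (k d : nat) (alpha v : R)
    (w x : 'rV[R]_d) y (W : 'M_(k + k, d)) j :
  dotp w (row j (grad_example alpha v x y W)) =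
  if y * netN alpha v W x < 1
  then - (vvec v j * leaky' alpha (dotp (row j W) x) * (y * dotp w x)) else 0.
Proof.
rewrite /grad_example /dotp; case: ifP => _.
  by rewrite !mulr_sumr -sumrN; apply: eq_bigr => l _; rewrite !mxE; ring.
by apply: big1 => l _; rewrite !mxE mulr0.
Qed.

Section CriticalPoints.
Variables (R : realFieldType) (k d n : nat) (alpha v : R).
Variables (xs : 'I_n -> 'rV[R]_d) (ys : 'I_n -> R) (w : 'rV[R]_d).
Hypotheses (alpha_gt0 : 0 < alpha) (v_gt0 : 0 < v) (k_gt0 : (0 < k)%N).
Hypothesis separable : forall i, 1 <= ys i * dotp w (xs i).

Lemma critical_point_fits (W : 'M_(k + k, d)) : critical_point alpha v xs ys W ->
  forall i, 1 <= ys i * netN alpha v W (xs i).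
Proof.
move=> crit.
pose j0 := lshift k (Ordinal k_gt0).
pose D i := - dotp w (row j0 (grad_example alpha v (xs i) (ys i) W)).
have D_gt0 i : ys i * netN alpha v W (xs i) < 1 -> 0 < D i.
  move=> miss; rewrite /D dotp_row_grad_example miss opprK /vvec /= k_gt0.
  have margin_gt0 := lt_le_trans ltr01 (separable i).
  by rewrite mulr_gt0 // mulr_gt0 // leaky'_gt0.
have D_ge0 i : 0 <= D i.
  have [/D_gt0/ltW //|fit] := ltP (ys i * netN alpha v W (xs i)) 1.
  by rewrite /D dotp_row_grad_example ltNge fit oppr0.
have sumD : \sum_i D i = 0.
  by rewrite sumrN -dotp_row_sum critical_point_sum // /dotp big1 ?oppr0 // => l _; rewrite !mxE mulr0.
move=> i; rewrite leNgt; apply/negP => /D_gt0.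
by rewrite (psumr_eq0P (fun i _ => D_ge0 i) sumD) ?ltxx.
Qed.

End CriticalPoints.

Definition tied_weights (R : realFieldType) (k d : nat) (a b : R) (u : 'rV[R]_d) :
    'M[R]_(k + k, d) :=
  \matrix_(j < k + k) (if (j < k)%N then a *: u else b *: u).

Lemma tied_weightsD (R : realFieldType) (k d : nat) (a1 b1 a2 b2 s t : R) (u : 'rV[R]_d) :
  s *: tied_weights k a1 b1 u + t *: tied_weights k a2 b2 u =
  tied_weights k (s * a1 + t * a2) (s * b1 + t * b2) u.
Proof. by apply/matrixP => j l; rewrite /tied_weights !mxE; case: ifP => _; rewrite !mxE; ring. Qed.

Lemma row_tied_weights (R : realFieldType) (k d : nat) (a b : R) (u : 'rV[R]_d) j :
  row j (tied_weights k a b u) = if (j < k)%N then a *: u else b *: u.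
Proof. exact: rowK. Qed.

Lemma netN_tied_weights (R : realFieldType) (k d : nat) (alpha v a b : R) (u x : 'rV[R]_d) :
  netN alpha v (tied_weights k a b u) x =
  k%:R * v * (leaky alpha (a * dotp u x) - leaky alpha (b * dotp u x)).
Proof.
rewrite /netN big_split_ord /=.
under eq_bigr do rewrite row_tied_weights /vvec /= ltn_ord.
under [X in _ + X]eq_bigr do rewrite row_tied_weights /vvec /= ltnNge leq_addr /=.
by rewrite !dotpZl !sumr_const card_ord -mulrnDl -[in LHS]mulr_natl; ring.
Qed.

Definition pair_margin (R : realFieldType) (alpha y a b : R) : R :=
  y * (leaky alpha (a * y) - leaky alpha (b * y)).

Lemma margin_tied_weights (R : realFieldType) (k d : nat) (alpha v a b y : R)
    (u x : 'rV[R]_d) :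
  y * y = 1 -> 0 <= y * dotp u x ->
  y * netN alpha v (tied_weights k a b u) x =
  k%:R * v * (y * dotp u x) * pair_margin alpha y a b.
Proof.
move=> yy; rewrite netN_tied_weights; set s := y * dotp u x => s_ge0.
have -> : dotp u x = s * y by rewrite /s mulrC mulrA yy mul1r.
by rewrite !(mulrCA _ s) !(leakyZ alpha (c := s)) // /pair_margin; ring.
Qed.

Lemma pair_margin_mirror (R : realFieldType) (alpha y a b : R) :
  pair_margin alpha (- y) (- b) (- a) = pair_margin alpha y a b.
Proof. by rewrite /pair_margin !mulrNN; ring. Qed.

Definition pair_fits (R : realFieldType) (alpha a b : R) : Prop :=
  alpha <= pair_margin alpha 1 a b /\ alpha <= pair_margin alpha (-1) a b.

Lemma pair_fits_mirror (R : realFieldType) (alpha a b : R) :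
  pair_fits alpha a b -> pair_fits alpha (- b) (- a).
Proof.
by case=> fit_pos fit_neg; split; rewrite ?pair_margin_mirror // -[1]opprK pair_margin_mirror.
Qed.

Lemma pair_fits_midpoint_gap (R : realFieldType) (alpha eps : R) :
  0 < alpha -> alpha < 1 -> eps = 1 \/ eps = -1 ->
  exists a1 b1 a2 b2, [/\ pair_fits alpha a1 b1, pair_fits alpha a2 b2 &
    pair_margin alpha eps ((a1 + a2) / 2) ((b1 + b2) / 2) < alpha].
Proof.
move=> alpha_gt0 alpha_lt1.
have alpha01 : 0 <= alpha <= 1 by rewrite !ltW.
have fit1 : pair_fits alpha (- alpha) (- 1 - alpha).
  rewrite /pair_fits /pair_margin !leakyE // ?mul1r ?mulr1 ?mulN1r ?mulrN1.
  by repeat case: (leP 0) => ?; nra.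
have fit2 : pair_fits alpha (alpha - alpha ^+ 2) (- alpha).
  rewrite /pair_fits /pair_margin !leakyE // ?mul1r ?mulr1 ?mulN1r ?mulrN1.
  by repeat case: (leP 0) => ?; nra.
(* The midpoint margin falls short of alpha by alpha (1 - alpha)^2 / 2. *)
have gap : pair_margin alpha 1 ((- alpha + (alpha - alpha ^+ 2)) / 2)
                               ((- 1 - alpha - alpha) / 2) < alpha.
  have : 0 < alpha * (1 - alpha) ^+ 2 by rewrite mulr_gt0 // exprn_gt0 // subr_gt0.
  rewrite /pair_margin !leakyE // ?mul1r ?mulr1 ?mulN1r ?mulrN1.
  by repeat case: (leP 0) => ?; nra.
case=> ->.
  by exists (- alpha), (- 1 - alpha), (alpha - alpha ^+ 2), (- alpha).
exists alpha, (alpha ^+ 2 - alpha), (alpha + 1), alpha; split.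
- by move: (pair_fits_mirror fit2); rewrite opprB !opprK.
- by move: (pair_fits_mirror fit1); rewrite opprB !opprK.
- rewrite -pair_margin_mirror.
  by move: gap; congr (_ < _); congr pair_margin; field.
Qed.

Section NonConvexity.
Variables (R : realFieldType) (k d n : nat) (alpha v : R).
Variables (xs : 'I_n -> 'rV[R]_d) (ys : 'I_n -> R) (w : 'rV[R]_d) (i0 : 'I_n).
Hypotheses (alpha_gt0 : 0 < alpha) (alpha_lt1 : alpha < 1).
Hypotheses (v_gt0 : 0 < v) (k_gt0 : (0 < k)%N).
Hypothesis ys_sign : forall i, ys i = 1 \/ ys i = -1.
Hypothesis separable : forall i, 1 <= ys i * dotp w (xs i).
Hypothesis i0_min : forall i, ys i0 * dotp w (xs i0) <= ys i * dotp w (xs i).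

Let m := ys i0 * dotp w (xs i0).
(* Scaled so that ys i0 * netN = pair_margin / alpha on the example of least margin. *)
Let u := (alpha * m * (k%:R * v))^-1 *: w.

Let m_gt0 : 0 < m. Proof. exact: lt_le_trans ltr01 (separable i0). Qed.

Lemma margin_tied i a b :
  ys i * netN alpha v (tied_weights k a b u) (xs i) =
  ys i * dotp w (xs i) / (alpha * m) * pair_margin alpha (ys i) a b.
Proof.
have yy : ys i * ys i = 1 by case: (ys_sign i) => ->; rewrite ?mulrNN mulr1.
have uE : ys i * dotp u (xs i) = (alpha * m * (k%:R * v))^-1 * (ys i * dotp w (xs i)).
  by rewrite dotpZl mulrCA.
have kv_gt0 : 0 < k%:R * v by rewrite mulr_gt0 // ltr0n.
have u_margin_ge0 : 0 <= ys i * dotp u (xs i).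
  by rewrite uE mulr_ge0 ?invr_ge0 ?(le_trans ler01 (separable i)) // ltW // mulr_gt0 // mulr_gt0.
rewrite margin_tied_weights // uE.
by field; rewrite pnatr_eq0 -lt0n k_gt0 !gt_eqF.
Qed.

Lemma lossS_tied_eq0 a b : pair_fits alpha a b ->
  lossS alpha v xs ys (tied_weights k a b u) = 0.
Proof.
move=> [fit_pos fit_neg]; apply: lossS_eq0 => i; rewrite margin_tied.
have fit : alpha <= pair_margin alpha (ys i) a b by case: (ys_sign i) => ->.
rewrite (_ : _ / _ * _ = (ys i * dotp w (xs i) / m) * (pair_margin alpha (ys i) a b / alpha)).
  by rewrite mulr_ege1 // ler_pdivlMr // mul1r.
by field; rewrite !gt_eqF.
Qed.

Lemma lossS_tied_gt0 a b : pair_margin alpha (ys i0) a b < alpha ->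
  0 < lossS alpha v xs ys (tied_weights k a b u).
Proof.
move=> gap; apply: (lossS_gt0 (i := i0)); rewrite margin_tied -/m.
rewrite (_ : _ / _ * _ = pair_margin alpha (ys i0) a b / alpha).
  by rewrite ltr_pdivrMr // mul1r.
by field; rewrite !gt_eqF.
Qed.

Lemma lossS_not_convex : ~ convex_fun (lossS (k := k) alpha v xs ys).
Proof.
move=> convex.
have [a1 [b1 [a2 [b2 [fit1 fit2 gap]]]]] :=
  pair_fits_midpoint_gap alpha_gt0 alpha_lt1 (ys_sign i0).
have half_ge0 : 0 <= 1 / 2 :> R by lra.
have half_le1 : 1 / 2 <= 1 :> R by lra.
have half (t s : R) : 1 / 2 * t + (1 - 1 / 2) * s = (t + s) / 2 by field.
have := convex (tied_weights k a1 b1 u) (tied_weights k a2 b2 u) _ half_ge0 half_le1.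
rewrite tied_weightsD (lossS_tied_eq0 fit1) (lossS_tied_eq0 fit2) !mulr0 addr0.
by rewrite !half leNgt lossS_tied_gt0.
Qed.

End NonConvexity.

Theorem proposition1 (R : realFieldType) (d k n : nat) (alpha v : R)
    (xs : 'I_n -> 'rV[R]_d) (ys : 'I_n -> R) :
  (1 <= d)%N -> (1 <= k)%N -> (1 <= n)%N ->
  0 < alpha -> alpha < 1 -> 0 < v ->
  (forall i : 'I_n, \sum_(l < d) (xs i 0 l) ^+ 2 <= 1) ->
  (forall i : 'I_n, ys i = 1 \/ ys i = -1) ->
  (exists wstar : 'rV[R]_d, forall i : 'I_n, 1 <= ys i * dotp wstar (xs i)) ->
  (forall W : 'M[R]_(k + k, d),
     critical_point alpha v xs ys W -> global_min (lossS alpha v xs ys) W)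
  /\ ~ convex_fun (@lossS R k d n alpha v xs ys).
Proof.
move=> _ k_gt0 n_gt0 alpha_gt0 alpha_lt1 v_gt0 _ ys_sign [w separable]; split.
  move=> W crit W'.
  have fits := critical_point_fits alpha_gt0 v_gt0 k_gt0 separable crit.
  by rewrite lossS_eq0 // lossS_ge0.
pose i0 := [arg min_(i < Ordinal n_gt0) ys i * dotp w (xs i)]%O.
have i0_min i : ys i0 * dotp w (xs i0) <= ys i * dotp w (xs i).
  by rewrite /i0; case: arg_minP => // j _; apply.
exact: (lossS_not_convex alpha_gt0 alpha_lt1 v_gt0 k_gt0 ys_sign separable i0_min).
Qed.
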